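(* Fix $1\le p<2$ and constants $C_0,C_1>0$. There are constants $\omega_0$ and $c>0$ such that for all integers $d\ge2$, $n\ge d^2$, every $\omega\ge\omega_0$ and every fixed $y\in\mathbb{R}^n$: (i) if $\Pi$ is an $R\times n$ CountSketch matrix with $R=\lceil C_0d^2\rceil$, then with probability at least $1-\exp(-c\,\omega d\log d)$, $\|\Pi(y_{1:d^2})\|_p\le(\omega d\log d)^{1-1/p}\|y\|_p$; (ii) if $2<B\le d$ and $\Pi$ is an $R\times n$ OSNAP matrix with $R=\lceil C_0Bd\log d\rceil$ rows and $s=\lceil C_1\log_B d\rceil\le R$ non-zeros per column, then with probability at least $1-\exp(-c\,\omega d\log d)$, $\|\Pi(y_{1:d^2})\|_p\le s^{1/p-1/2}(\omega d\log d)^{1-1/p}\|y\|_p$.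
   Context: For $u\in\mathbb{R}^n$ and $1\le a\le b\le n$, $u_{a:b}$ denotes the vector whose $i$-th coordinate equals $u_i$ if $i\in[a,b]$ and $0$ otherwise. An $R\times n$ CountSketch matrix: independently for each column $j$, a uniformly random row $h(j)\in[R]$ is chosen and $\Pi_{h(j),j}$ is a uniformly random sign in $\{-1,1\}$; all other entries are $0$. An $R\times n$ OSNAP matrix with $s$ non-zeros per column: independently for each column, $s$ distinct rows are chosen uniformly at random and those entries are independently set to $\pm s^{-1/2}$ with uniformly random sign; all other entries are $0$. $\|y\|_p=(\sum_i|y_i|^p)^{1/p}$. *)

From Stdlib Require Import Reals.
From mathcomp Require Import all_boot.
Set Implicit Arguments. Unset Strict Implicit. Unset Printing Implicit Defensive.

Local Open Scope R_scope.

(* x^a for x >= 0, with the convention 0^a = 0 (used with a > 0). *)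
Definition rpow (x a : R) : R := if Rlt_dec 0 x then Rpower x a else 0.

Definition sumR (k : nat) (F : 'I_k -> R) : R := \big[Rplus/0]_(i < k) F i.

Definition pnorm (p : R) (k : nat) (v : 'I_k -> R) : R :=
  rpow (sumR (fun i => rpow (Rabs (v i)) p)) (/ p).

(* u_{1:k}: keep coordinates 1..k (0-indexed: i < k), zero elsewhere. *)
Definition restrict (k n : nat) (y : 'I_n -> R) : 'I_n -> R :=
  fun i => if (i < k)%N then y i else 0.

Definition sgnR (b : bool) : R := if b then 1 else -1.

Definition Rleb (x y : R) : bool := if Rle_dec x y then true else false.

Definition mxapply (m n : nat) (P : 'I_m -> 'I_n -> R) (v : 'I_n -> R) : 'I_m -> R :=
  fun r => sumR (fun j => P r j * v j).

(* A sample: for each column j, a row h(j) and a sign. Uniform over all samples. *)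
Definition CS_config (m n : nat) := {ffun 'I_n -> 'I_m * bool}.

Definition CS_matrix (m n : nat) (w : CS_config m n) : 'I_m -> 'I_n -> R :=
  fun r j => if (w j).1 == r then sgnR (w j).2 else 0.

Definition probCS (m n : nat) (E : CS_config m n -> bool) : R :=
  INR #|[set w : CS_config m n | E w]| / INR #|[set: CS_config m n]|.

(* A sample: for each column j, a set of rows (required to have exactly s
   elements) and a sign for every row (only the signs on the chosen rows matter;
   uniform signs on all rows give independent uniform signs on chosen rows). *)
Definition OS_config (m n : nat) := {ffun 'I_n -> {set 'I_m} * {ffun 'I_m -> bool}}.

Definition OS_valid (m n s : nat) (w : OS_config m n) : bool :=
  [forall j, #|(w j).1| == s].

Definition OS_matrix (m n s : nat) (w : OS_config m n) : 'I_m -> 'I_n -> R :=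
  fun r j => if r \in (w j).1 then sgnR ((w j).2 r) / sqrt (INR s) else 0.

Definition probOS (m n s : nat) (E : OS_config m n -> bool) : R :=
  INR #|[set w : OS_config m n | OS_valid s w && E w]|
  / INR #|[set w : OS_config m n | OS_valid s w]|.

From Stdlib Require Import Reals Lra Lia.
From mathcomp Require Import all_boot zify.
From HB Require Import structures.

(* Let K = omega d ln d. Deterministically, if every row of a matrix whose
   entries have modulus at most al, with at most s non-zeros per column, meets at
   most K of the first d^2 columns, then the power-mean inequality on each row and
   double counting over the columns give
     ||P y_{1:d^2}||_p^p <= K^(p-1) al^p s ||y||_p^p,
   which is the claimed bound for al = s = 1 (CountSketch) and for al = s^(-1/2)
   (OSNAP). The columns are independent and each hits a fixed row with
   probability q = 1/m resp. s/m, so a row meets k of the first d^2 columns with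
   probability at most C(d^2, k) q^k <= (e d^2 q / k)^k <= e^-k once
   k >= e^2 d^2 q, which holds for k > K when omega is large. A union bound over
   the m <= C0 d^3 + 1 rows costs a factor absorbed by half of the exponent. *)

Set Implicit Arguments. Unset Strict Implicit. Unset Printing Implicit Defensive.
Local Open Scope R_scope.

HB.instance Definition _ := Monoid.isComLaw.Build R 0 Rplus
  (fun a b c => esym (Rplus_assoc a b c)) Rplus_comm Rplus_0_l.

Lemma iter_Rplus k c : iter k (Rplus c) 0 = INR k * c.
Proof. by elim: k => [|k IH]; rewrite ?Rmult_0_l // [iter _ _ _]/= IH S_INR; ring. Qed.

Section RealSums.
Variable I : finType.

Lemma leR_sum (P : pred I) (F G : I -> R) :
  (forall i, P i -> F i <= G i) ->
  \big[Rplus/0]_(i | P i) F i <= \big[Rplus/0]_(i | P i) G i.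
Proof.
move=> FG; apply: (big_ind2 (fun a b => a <= b)) => //; first lra.
by move=> ? ? ? ? ? ?; lra.
Qed.

Lemma sumR_ge0 (P : pred I) (F : I -> R) :
  (forall i, P i -> 0 <= F i) -> 0 <= \big[Rplus/0]_(i | P i) F i.
Proof.
move=> F0; apply: (big_ind (fun a => 0 <= a)) => //; first lra.
by move=> ? ? ? ?; lra.
Qed.

Lemma mulR_sumr (P : pred I) (F : I -> R) c :
  c * \big[Rplus/0]_(i | P i) F i = \big[Rplus/0]_(i | P i) (c * F i).
Proof.
apply: (big_rec2 (fun a b => c * a = b)); first ring.
by move=> i a b _ <-; ring.
Qed.

Lemma Rabs_sum_le (P : pred I) (F : I -> R) :
  Rabs (\big[Rplus/0]_(i | P i) F i) <= \big[Rplus/0]_(i | P i) Rabs (F i).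
Proof.
apply: (big_rec2 (fun a b => Rabs a <= b)); first by rewrite Rabs_R0; lra.
move=> i a b _ ab; apply: Rle_trans (Rabs_triang _ _) _; lra.
Qed.

Lemma sumR_const (A : {pred I}) c : \big[Rplus/0]_(i in A) c = INR #|A| * c.
Proof. by rewrite big_const iter_Rplus. Qed.

Lemma INR_sumn (F : I -> nat) :
  INR (\sum_(i : I) F i)%N = \big[Rplus/0]_(i : I) INR (F i).
Proof. by apply: (big_morph INR) => [x y|]; [exact: plus_INR | done]. Qed.

End RealSums.

Lemma INR_muln a b : INR (a * b)%N = INR a * INR b.
Proof. exact: mult_INR. Qed.

Lemma INR_expn a b : INR (a ^ b)%N = INR a ^ b.
Proof. by elim: b => [|b IH]; rewrite ?expn0 // expnS INR_muln IH. Qed.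

Lemma rpowE x a : 0 < x -> rpow x a = Rpower x a.
Proof. by rewrite /rpow; case: (Rlt_dec 0 x). Qed.

Lemma rpow_le0 x a : x <= 0 -> rpow x a = 0.
Proof. by move=> x0; rewrite /rpow; case: (Rlt_dec 0 x) => // ?; lra. Qed.

Lemma rpow_ge0 x a : 0 <= rpow x a.
Proof.
rewrite /rpow; case: (Rlt_dec 0 x) => [?|?] /=; [exact/Rlt_le/exp_pos | lra].
Qed.

Lemma rpow_gt0 x a : 0 < x -> 0 < rpow x a.
Proof. by move=> x0; rewrite rpowE //; exact: exp_pos. Qed.

Lemma le_rpow x y a : 0 <= a -> 0 <= x <= y -> rpow x a <= rpow y a.
Proof.
move=> a0 xy; case: (Rle_lt_dec x 0) => x0.
  by rewrite (rpow_le0 _ x0); exact: rpow_ge0.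
rewrite !rpowE; try lra; apply: Rle_Rpower_l; lra.
Qed.

Lemma rpow_mult_distr x y a :
  0 <= x -> 0 <= y -> rpow (x * y) a = rpow x a * rpow y a.
Proof.
move=> x0 y0; case: (Rle_lt_dec x 0) => x0'.
  have -> : x = 0 by lra.
  by rewrite Rmult_0_l !(rpow_le0 _ (Rle_refl 0)); ring.
case: (Rle_lt_dec y 0) => y0'.
  have -> : y = 0 by lra.
  by rewrite Rmult_0_r !(rpow_le0 _ (Rle_refl 0)); ring.
by rewrite !rpowE ?Rpower_mult_distr //; nra.
Qed.

Lemma rpow_rpow x a b : rpow (rpow x a) b = rpow x (a * b).
Proof.
case: (Rle_lt_dec x 0) => x0.
  by rewrite (rpow_le0 _ x0) (rpow_le0 _ (Rle_refl 0)) (rpow_le0 _ x0).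
by rewrite !rpowE ?Rpower_mult //; exact: exp_pos.
Qed.

Lemma rpow_plus x a b : 0 < x -> rpow x (a + b) = rpow x a * rpow x b.
Proof. by move=> x0; rewrite !rpowE // Rpower_plus Rmult_comm. Qed.

Lemma rpow_1 x : 0 <= x -> rpow x 1 = x.
Proof.
move=> x0; case: (Rle_lt_dec x 0) => x0'; first by rewrite rpow_le0 //; lra.
by rewrite rpowE // Rpower_1.
Qed.

Lemma Rpower_bernoulli z p : 1 <= p -> 0 < z -> 1 + p * (z - 1) <= Rpower z p.
Proof.
move=> p1 z0.
have -> : Rpower z p = z * Rpower z (p - 1).
  by rewrite -{2}(Rpower_1 z) // -Rpower_plus; f_equal; ring.
have exp_ge : 1 + (p - 1) * ln z <= Rpower z (p - 1) by exact: exp_ineq1_le.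
have ln_ge : 1 - / z <= ln z.
  have := exp_ineq1_le (ln (/ z)).
  by rewrite exp_ln ?ln_Rinv; [lra | | exact: Rinv_0_lt_compat].
have : z - 1 <= z * ln z.
  have <- : z * (1 - / z) = z - 1 by field; lra.
  by apply: Rmult_le_compat_l; lra.
nra.
Qed.

Lemma rpow_tangent_le t mu p : 1 <= p -> 0 <= t -> 0 < mu ->
  rpow mu p + p * rpow mu (p - 1) * (t - mu) <= rpow t p.
Proof.
move=> p1 t0 mu0.
have mu_p : rpow mu p = mu * rpow mu (p - 1).
  by rewrite -{2}(rpow_1 (Rlt_le _ _ mu0)) -rpow_plus //; f_equal; ring.
have := rpow_gt0 (p - 1) mu0.
case: (Rle_lt_dec t 0) => t0'.
  have -> : t = 0 by lra.
  rewrite (rpow_le0 _ (Rle_refl 0)) mu_p => ?.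
  have : 0 <= (p - 1) * (mu * rpow mu (p - 1)) by apply: Rmult_le_pos; nra.
  nra.
move=> mu_p1; have tmu : 0 < t / mu by exact: Rdiv_lt_0_compat.
have -> : rpow t p = rpow mu p * Rpower (t / mu) p.
  rewrite -(rpowE p tmu) -rpow_mult_distr; try lra.
  by f_equal; field; lra.
have : rpow mu p * (1 + p * (t / mu - 1)) <= rpow mu p * Rpower (t / mu) p.
  by apply: Rmult_le_compat_l; [exact/Rlt_le/rpow_gt0 | exact: Rpower_bernoulli].
suff -> : rpow mu p * (1 + p * (t / mu - 1)) =
          rpow mu p + p * rpow mu (p - 1) * (t - mu) by [].
by rewrite mu_p; field; lra.
Qed.

(* Sum the tangent inequality at the mean of the t i. *)
Lemma rpow_sum_le (J : finType) (A : {pred J}) (t : J -> R) p :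
  1 <= p -> (forall i, 0 <= t i) ->
  rpow (\big[Rplus/0]_(i in A) t i) p <=
  rpow (INR #|A|) (p - 1) * \big[Rplus/0]_(i in A) rpow (t i) p.
Proof.
move=> p1 t0; set T := \big[Rplus/0]_(i in A) t i.
have sum_pow_ge0 : 0 <= \big[Rplus/0]_(i in A) rpow (t i) p.
  by apply: sumR_ge0 => i _; exact: rpow_ge0.
case: (Rle_lt_dec T 0) => T0.
  by rewrite rpow_le0 //; apply: Rmult_le_pos => //; exact: rpow_ge0.
have A0 : (0 < #|A|)%N.
  rewrite lt0n; apply/negP => /eqP /card0_eq A0.
  by move: T0; rewrite /T big_pred0 // => ?; lra.
set N := INR #|A|; have N0 : 0 < N by apply: lt_0_INR; apply/ltP.
set mu := T / N; have mu0 : 0 < mu by exact: Rdiv_lt_0_compat.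
have sum_tangents :
    \big[Rplus/0]_(i in A) (rpow mu p + p * rpow mu (p - 1) * (t i - mu)) = N * rpow mu p.
  rewrite big_split sumR_const -mulR_sumr big_split sumR_const /= -/T -/N.
  by rewrite /mu; field; lra.
have : N * rpow mu p <= \big[Rplus/0]_(i in A) rpow (t i) p.
  by rewrite -sum_tangents; apply: leR_sum => i _; exact: rpow_tangent_le.
have -> : T = N * mu by rewrite /mu; field; lra.
rewrite rpow_mult_distr; try lra.
have -> : rpow N p = rpow N (p - 1) * N.
  by rewrite -{3}(rpow_1 (Rlt_le _ _ N0)) -rpow_plus //; f_equal; ring.
have := rpow_gt0 (p - 1) N0; nra.
Qed.

Lemma pnorm_le_of_pow_le p m n (u : 'I_m -> R) (y : 'I_n -> R) F :
  1 <= p -> 0 <= F ->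
  sumR (fun r => rpow (Rabs (u r)) p) <= F * sumR (fun j => rpow (Rabs (y j)) p) ->
  pnorm p u <= rpow F (/ p) * pnorm p y.
Proof.
move=> p1 F0 uy; rewrite /pnorm -rpow_mult_distr //; last first.
  by apply: sumR_ge0 => j _; exact: rpow_ge0.
apply: le_rpow; first by apply/Rlt_le/Rinv_0_lt_compat; lra.
by split => //; apply: sumR_ge0 => j _; exact: rpow_ge0.
Qed.

Section SparseMatrix.
Variables (m n D : nat) (P : 'I_m -> 'I_n -> R) (supp : 'I_m -> 'I_n -> bool).
Variables (p al K : R) (s : nat).
Hypothesis p_ge1 : 1 <= p.
Hypothesis al_ge0 : 0 <= al.
Hypothesis P_supp : forall r j, ~~ supp r j -> P r j = 0.
Hypothesis P_bounded : forall r j, Rabs (P r j) <= al.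

Let cols r := [set j : 'I_n | (j < D)%N && supp r j].

Hypothesis row_load : forall r, INR #|cols r| <= K.
Hypothesis col_load : forall j, (#|[set r : 'I_m | supp r j]| <= s)%N.

Lemma row_pow_le (y : 'I_n -> R) r :
  rpow (Rabs (mxapply P (restrict D y) r)) p
  <= rpow K (p - 1) * rpow al p * \big[Rplus/0]_(j in cols r) rpow (Rabs (y j)) p.
Proof.
have row_le : Rabs (mxapply P (restrict D y) r)
              <= \big[Rplus/0]_(j in cols r) (al * Rabs (y j)).
  rewrite /mxapply /sumR; apply: Rle_trans (Rabs_sum_le _ _) _.
  rewrite [X in _ <= X]big_mkcond; apply: leR_sum => j _.
  rewrite /cols inE /restrict Rabs_mult.
  case: (boolP (j < D)%N) => jD /=; case: (boolP (supp r j)) => rj /=.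
  - by apply: Rmult_le_compat_r; [exact: Rabs_pos | exact: P_bounded].
  - by rewrite P_supp // Rabs_R0; lra.
  - by rewrite Rabs_R0; lra.
  - by rewrite Rabs_R0; lra.
apply: Rle_trans (_ : rpow (\big[Rplus/0]_(j in cols r) (al * Rabs (y j))) p <= _).
  by apply: le_rpow; [lra | split; [exact: Rabs_pos | exact: row_le]].
apply: Rle_trans.
  apply: rpow_sum_le => // j; apply: Rmult_le_pos => //; exact: Rabs_pos.
rewrite (eq_bigr (fun j => rpow al p * rpow (Rabs (y j)) p)); last first.
  by move=> j _; rewrite rpow_mult_distr //; exact: Rabs_pos.
rewrite -mulR_sumr -Rmult_assoc; apply: Rmult_le_compat_r.
  by apply: sumR_ge0 => j _; exact: rpow_ge0.
apply: Rmult_le_compat_r; first exact: rpow_ge0.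
by apply: le_rpow; [lra | split; [exact: pos_INR | exact: row_load]].
Qed.

Lemma sum_rows_le (g : 'I_n -> R) : (forall j, 0 <= g j) ->
  \big[Rplus/0]_(r < m) \big[Rplus/0]_(j in cols r) g j <= INR s * sumR g.
Proof.
move=> g0; under eq_bigr => r _ do rewrite big_mkcond.
rewrite exchange_big /sumR mulR_sumr; apply: leR_sum => j _ /=.
rewrite -(big_mkcond (fun r => j \in cols r) (fun _ => g j)) /=.
rewrite (eq_bigl (fun r => r \in [set r : 'I_m | j \in cols r])); last first.
  by move=> r; rewrite inE.
rewrite sumR_const; apply: Rmult_le_compat_r => //.
apply/le_INR/leP; apply: leq_trans (col_load j).
by apply: subset_leq_card; apply/subsetP => r; rewrite !inE => /andP [].
Qed.

Lemma sketch_pnorm_pow_le (y : 'I_n -> R) :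
  sumR (fun r => rpow (Rabs (mxapply P (restrict D y) r)) p)
  <= rpow K (p - 1) * rpow al p * INR s * sumR (fun j => rpow (Rabs (y j)) p).
Proof.
apply: Rle_trans (_ : \big[Rplus/0]_(r < m) (rpow K (p - 1) * rpow al p *
    \big[Rplus/0]_(j in cols r) rpow (Rabs (y j)) p) <= _).
  by apply: leR_sum => r _; exact: row_pow_le.
rewrite -mulR_sumr [X in _ <= X]Rmult_assoc; apply: Rmult_le_compat_l.
  by apply: Rmult_le_pos; exact: rpow_ge0.
by apply: sum_rows_le => j; exact: rpow_ge0.
Qed.

Lemma sketch_pnorm_le (y : 'I_n -> R) :
  pnorm p (mxapply P (restrict D y))
  <= rpow (rpow K (p - 1) * rpow al p * INR s) (/ p) * pnorm p y.
Proof.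
apply: pnorm_le_of_pow_le => //; last exact: sketch_pnorm_pow_le.
by apply: Rmult_le_pos; [apply: Rmult_le_pos; exact: rpow_ge0 | exact: pos_INR].
Qed.

End SparseMatrix.

(* A configuration w sets column j to w j; the uniform distribution on
   valid_configs makes the columns independent and uniform on V. *)
Section RandomColumns.
Variables (T : finType) (V : pred T) (n : nat).

Definition valid_configs := [set w : {ffun 'I_n -> T} | [forall j, V (w j)]].

Definition hit_cols (hit : pred T) (D : nat) (w : {ffun 'I_n -> T}) :=
  [set j : 'I_n | (j < D)%N && hit (w j)].

Lemma card_valid_configs : #|valid_configs| = (#|V| ^ n)%N.
Proof.
have -> : #|valid_configs| = #|family (fun _ : 'I_n => [pred t | V t])|.
  apply: eq_card => w; rewrite inE; apply/forallP/familyP => Vw j.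
    by rewrite inE /= Vw.
  by have := Vw j; rewrite inE.
rewrite card_family foldrE big_map big_enum /=.
rewrite (eq_bigr (fun _ => #|V|)); last by move=> j _; apply: eq_card.
by rewrite prod_nat_const card_ord.
Qed.

Lemma card_prefix_cols D : (D <= n)%N -> (#|[set j : 'I_n | (j < D)%N]| <= D)%N.
Proof.
move=> Dn; apply: leq_trans (_ : #|[set widen_ord Dn x | x in 'I_D]| <= D)%N.
  apply: subset_leq_card; apply/subsetP => j; rewrite inE => jD; apply/imsetP.
  by exists (Ordinal jD) => //; exact: val_inj.
by apply: leq_trans (leq_imset_card _ _) _; rewrite card_ord.
Qed.

Lemma card_configs_hitting (hit : pred T) D (S : {set 'I_n}) :
  (#|[set w in valid_configs | S \subset hit_cols hit D w]| <=
   #|[pred t | V t && hit t]| ^ #|S| * #|V| ^ #|~: S|)%N.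
Proof.
pose F j := if j \in S then [pred t | V t && hit t] else [pred t | V t].
apply: leq_trans (_ : #|family F| <= _)%N.
  apply/subset_leq_card/subsetP => w; rewrite !inE => /andP [/forallP Vw /subsetP Sw].
  apply/familyP => j; rewrite /F; case: ifP => jS; rewrite inE /= Vw //.
  by move: (Sw j jS); rewrite inE => /andP [].
rewrite card_family foldrE big_map big_enum /= (bigID (mem S)) /=.
apply: leq_mul.
  rewrite (eq_bigr (fun _ => #|[pred t | V t && hit t]|)) => [|j jS]; last first.
    by rewrite /F jS.
  by rewrite prod_nat_const.
rewrite (eq_bigr (fun _ => #|V|)) => [|j jS]; last first.
  by rewrite /F (negbTE jS); apply: eq_card.
rewrite prod_nat_const; apply: eq_leq; congr (_ ^ _)%N.
by apply: eq_card => j; rewrite !inE.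
Qed.

(* Double counting: a heavy configuration contains a k-set of hitting columns
   among the first D, and each such k-set is hit by few configurations. *)
Lemma card_heavy_configs (hit : pred T) D k : (D <= n)%N ->
  (#|[set w in valid_configs | (k <= #|hit_cols hit D w|)%N]| <=
   'C(D, k) * (#|[pred t | V t && hit t]| ^ k * #|V| ^ (n - k)))%N.
Proof.
move=> Dn; set Q := (#|[pred t | V t && hit t]| ^ k * #|V| ^ (n - k))%N.
set ksets := fun A : {set 'I_n} => [set S : {set 'I_n} | S \subset A & #|S| == k].
apply: leq_trans (_ : \sum_(w in valid_configs) #|ksets (hit_cols hit D w)| <= _)%N.
  rewrite -sum1_card big_mkcond [X in (_ <= X)%N]big_mkcond /=.
  apply: leq_sum => w _; rewrite inE cards_draws.
  by case: (w \in valid_configs) => //=; case: ifP => // kw; rewrite bin_gt0.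
under eq_bigr => w _ do rewrite -sum1_card big_mkcond /=.
rewrite exchange_big /=.
have per_set S :
    (\sum_(w in valid_configs) (if S \in ksets (hit_cols hit D w) then 1 else 0) <=
     (if S \in ksets [set j : 'I_n | (j < D)%N] then Q else 0))%N.
  rewrite inE; case: (boolP (S \subset _)) => SD /=; last first.
    rewrite big1 // => w _; rewrite inE; case: (boolP (S \subset _)) => //= Sw.
    case/negP: SD; apply: subset_trans Sw _.
    by apply/subsetP => j; rewrite !inE => /andP [].
  case: (boolP (#|S| == k)) => Sk /=; last first.
    by rewrite big1 // => w _; rewrite inE (negbTE Sk) andbF.
  apply: leq_trans (_ : #|[set w in valid_configs | S \subset hit_cols hit D w]| <= _)%N.
    rewrite -sum1_card [X in (_ <= X)%N]big_mkcond [X in (X <= _)%N]big_mkcond /=.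
    by apply: eq_leq; apply: eq_bigr => w _; rewrite !inE Sk andbT; case: [forall j, V (w j)].
  apply: leq_trans (card_configs_hitting hit D S) _.
  have -> : #|~: S| = (n - #|S|)%N by have := cardsC S; rewrite card_ord; lia.
  by rewrite (eqP Sk).
apply: leq_trans; first by apply: leq_sum => S _; exact: per_set.
rewrite -big_mkcond /= sum_nat_const cards_draws.
by apply: leq_mul => //; apply: leq_bin2l; exact: card_prefix_cols.
Qed.

Section Rows.
Variables (m : nat) (hit : 'I_m -> pred T) (D k : nat).

Let heavy r := [set w in valid_configs | (k <= #|hit_cols (hit r) D w|)%N].

Lemma card_valid_le_union (E : {ffun 'I_n -> T} -> bool) :
  (forall w, w \in valid_configs ->
     (forall r, (#|hit_cols (hit r) D w| < k)%N) -> E w) ->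
  (#|valid_configs| <= #|[set w in valid_configs | E w]| + \sum_(r < m) #|heavy r|)%N.
Proof.
move=> good; rewrite -!sum1_card.
rewrite [X in (X <= _)%N]big_mkcond [X in (_ <= X + _)%N]big_mkcond /=.
under [X in (_ <= _ + X)%N]eq_bigr => r _ do rewrite -sum1_card big_mkcond /=.
rewrite exchange_big /= -big_split /=; apply: leq_sum => w _.
case: (boolP (w \in valid_configs)) => //= wV; rewrite inE wV /=.
case: (boolP (E w)) => //= Ew.
have [r heavy_r | light] := pickP (fun r => k <= #|hit_cols (hit r) D w|)%N.
  by rewrite (bigD1 r) //= inE wV heavy_r.
by case/negP: Ew; apply: good => // r; rewrite ltnNge light.
Qed.

Lemma frac_good_configs_ge (E : {ffun 'I_n -> T} -> bool) (q : R) :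
  (D <= n)%N -> (0 < #|V|)%N ->
  (forall w, w \in valid_configs ->
     (forall r, (#|hit_cols (hit r) D w| < k)%N) -> E w) ->
  (forall r, INR #|[pred t | V t && hit r t]| <= q * INR #|V|) ->
  INR #|[set w in valid_configs | E w]| / INR #|valid_configs|
  >= 1 - INR m * (INR 'C(D, k) * q ^ k).
Proof.
move=> Dn V0 good hit_le; set v := INR #|V|.
have v0 : 0 < v by apply/lt_0_INR/ltP.
have card_valid : INR #|valid_configs| = v ^ n by rewrite card_valid_configs INR_expn.
have heavy_le r : INR #|heavy r| <= INR 'C(D, k) * q ^ k * v ^ n.
  apply: Rle_trans (_ : INR ('C(D, k) * (#|[pred t | V t && hit r t]| ^ k
                                         * #|V| ^ (n - k)))%N <= _).
    by apply/le_INR/leP; exact: card_heavy_configs.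
  case: (leqP k n) => kn; last first.
    by rewrite bin_small ?(leq_ltn_trans Dn kn) //= !Rmult_0_l; right.
  rewrite !INR_muln !INR_expn -/v.
  have -> : v ^ n = v ^ k * v ^ (n - k) by rewrite -pow_add; congr (_ ^ _); lia.
  have hit_pow : INR #|[pred t | V t && hit r t]| ^ k <= q ^ k * v ^ k.
    by rewrite -Rpow_mult_distr; apply: pow_incr; split; [exact: pos_INR | exact: hit_le].
  rewrite [X in _ <= X]Rmult_assoc -[q ^ k * _]Rmult_assoc.
  apply: Rmult_le_compat_l; first exact: pos_INR.
  by apply: Rmult_le_compat_r; [apply: pow_le; lra | exact: hit_pow].
have union : v ^ n <= INR #|[set w in valid_configs | E w]| +
                      INR m * (INR 'C(D, k) * q ^ k * v ^ n).
  rewrite -card_valid; apply: Rle_trans.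
    by apply/le_INR/leP; exact: (card_valid_le_union good).
  rewrite plus_INR; apply: Rplus_le_compat_l.
  rewrite (INR_sumn (fun r => #|heavy r|)).
  apply: Rle_trans; first by apply: leR_sum => r _; exact: heavy_le.
  by rewrite big_const_ord iter_Rplus card_valid; right.
rewrite card_valid; have vn0 : 0 < v ^ n by exact: pow_lt.
apply/Rle_ge/(Rmult_le_reg_r (v ^ n)) => //.
rewrite /Rdiv Rmult_assoc Rinv_l ?Rmult_1_r; [nra | lra].
Qed.

End Rows.

End RandomColumns.

Lemma exp_pow x k : exp x ^ k = exp (INR k * x).
Proof.
elim: k => [|k IH]; first by rewrite /= Rmult_0_l exp_0.
by rewrite -tech_pow_Rmult IH -exp_plus S_INR; f_equal; ring.
Qed.

Lemma ffact_leq_expn D k : (D ^_ k <= D ^ k)%N.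
Proof.
rewrite ffact_prod; apply: leq_trans (_ : \prod_(i < k) D <= _)%N.
  by apply: leq_prod => i _; exact: leq_subr.
by rewrite prod_nat_const card_ord.
Qed.

Lemma succ_pow_le k : INR k.+1 ^ k <= INR k ^ k * exp 1.
Proof.
case: k => [|k]; first by rewrite /= Rmult_1_l; have := exp_ineq1_le 1; lra.
set x := INR k.+1; have x0 : 0 < x by apply: lt_0_INR; lia.
have succ_le : INR k.+2 <= x * exp (/ x).
  rewrite (S_INR k.+1) -/x; have := exp_ineq1_le (/ x).
  have <- : x * (1 + / x) = x + 1 by field; lra.
  by move=> ?; apply: Rmult_le_compat_l; lra.
apply: Rle_trans (_ : (x * exp (/ x)) ^ k.+1 <= _).
  by apply: pow_incr; split => //; exact: pos_INR.
rewrite Rpow_mult_distr exp_pow -/x.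
by rewrite Rinv_r; [right | lra].
Qed.

Lemma fact_ge_pow_exp k : INR k ^ k * exp (- INR k) <= INR k`!.
Proof.
elim: k => [|k IH]; first by rewrite /= Rmult_1_l Ropp_0 exp_0; lra.
have -> : INR k.+1 ^ k.+1 * exp (- INR k.+1) =
          INR k.+1 * (INR k.+1 ^ k * exp (-1)) * exp (- INR k).
  rewrite -tech_pow_Rmult S_INR.
  have -> : exp (- (INR k + 1)) = exp (-1) * exp (- INR k).
    by rewrite -exp_plus; f_equal; ring.
  ring.
rewrite factS INR_muln Rmult_assoc; apply: Rmult_le_compat_l; first exact: pos_INR.
apply: Rle_trans IH; apply: Rmult_le_compat_r; first exact/Rlt_le/exp_pos.
have := Rmult_le_compat_r _ _ _ (Rlt_le _ _ (exp_pos (-1))) (succ_pow_le k).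
by rewrite Rmult_assoc -exp_plus Rplus_opp_r exp_0 Rmult_1_r.
Qed.

(* 'C(D, k) q^k <= (D q)^k / k! <= (e D q / k)^k, which is at most e^-k once D q e^2 <= k. *)
Lemma binomial_tail_le_exp (D k : nat) (q : R) :
  (0 < k)%N -> 0 <= q -> INR D * q * exp 2 <= INR k ->
  INR 'C(D, k) * q ^ k <= exp (- INR k).
Proof.
move=> k0 q0 Dq_le.
have k0' : 0 < INR k by apply: lt_0_INR; lia.
have fact0 : 0 < INR k`! by apply: lt_0_INR; have := fact_gt0 k; lia.
have bin_le : INR 'C(D, k) * INR k`! <= INR D ^ k.
  rewrite -INR_muln bin_ffact -INR_expn; apply/le_INR/leP; exact: ffact_leq_expn.
have kk0 : 0 < INR k ^ k * exp (- INR k) by apply: Rmult_lt_0_compat; [exact: pow_lt | exact: exp_pos].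
have Dq0 : 0 <= (INR D * q) ^ k by apply: pow_le; apply: Rmult_le_pos => //; exact: pos_INR.
apply: Rle_trans (_ : (INR D * q) ^ k / (INR k ^ k * exp (- INR k)) <= _).
  apply: Rle_trans (_ : (INR D * q) ^ k / INR k`! <= _).
    apply: (Rmult_le_reg_r (INR k`!)) => //.
    rewrite /Rdiv [X in _ <= X]Rmult_assoc Rinv_l ?Rmult_1_r ?Rpow_mult_distr; last lra.
    have := pow_le _ k q0; nra.
  apply: Rmult_le_compat_l => //; apply: Rinv_le_contravar => //; exact: fact_ge_pow_exp.
have Dq : INR D * q <= INR k * exp (-2).
  have : exp 2 * exp (-2) = 1 by rewrite -exp_plus Rplus_opp_r exp_0.
  have := exp_pos (-2); have := exp_pos 2; nra.
have : (INR D * q) ^ k <= (INR k * exp (-2)) ^ k.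
  by apply: pow_incr; split => //; apply: Rmult_le_pos => //; exact: pos_INR.
rewrite [X in _ <= X]Rpow_mult_distr exp_pow => pow_le_k.
apply: (Rmult_le_reg_r (INR k ^ k * exp (- INR k))) => //.
rewrite /Rdiv [X in X <= _]Rmult_assoc Rinv_l ?Rmult_1_r; last lra.
suff exp_sq : exp (INR k * -2) = exp (- INR k) * exp (- INR k).
  by rewrite exp_sq in pow_le_k; lra.
by rewrite -exp_plus; f_equal; ring.
Qed.

Lemma ln_gt_half x : 2 <= x -> / 2 < ln x.
Proof.
move=> x2; have := ln_lt_2; case: (Req_dec x 2) => [-> //|x_ne2].
by have := ln_increasing 2 x ltac:(lra) ltac:(lra); lra.
Qed.

Lemma exists_nat_between K : 0 < K ->
  exists k : nat, (0 < k)%N /\ K < INR k <= K + 1.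
Proof.
move=> K0; have [K_lt K_le] := archimed K.
have up0 : (0 < up K)%Z by apply: lt_IZR; lra.
exists (Z.to_nat (up K)).
rewrite INR_IZR_INZ Znat.Z2Nat.id; last lia.
by split; [apply/ltP; lia | lra].
Qed.

(* d^3 rows cost a factor e^{3 ln d}, absorbed by half of the exponent once omega >= 3 + 2 C0. *)
Lemma rows_exp_tail_le (C0 omega d m : R) :
  0 < C0 -> 3 + 2 * C0 <= omega -> 2 <= d -> m <= C0 * d ^ 3 + 1 ->
  m * exp (- (omega * d * ln d)) <= exp (- (/ 2 * omega * d * ln d)).
Proof.
move=> C0_gt0 omega_ge d2 m_le; have L_gt := ln_gt_half d2; set L := ln d in L_gt *.
have -> : exp (- (omega * d * L)) =
          exp (- (/ 2 * omega * d * L)) * exp (- (/ 2 * omega * d * L)).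
  by rewrite -exp_plus; f_equal; field.
set Z := exp (- (/ 2 * omega * d * L)); have Z0 : 0 < Z by exact: exp_pos.
suff : m * Z <= 1 by nra.
have Z_inv : Z * exp (/ 2 * omega * d * L) = 1.
  by rewrite /Z -exp_plus Rplus_opp_l exp_0.
have d3 : d ^ 3 = exp (3 * L).
  have -> : 3 * L = L + L + L by ring.
  by rewrite !exp_plus /L exp_ln /=; [ring | lra].
have C0_le : 1 + C0 <= exp ((omega - 3) * L).
  apply: Rle_trans (exp_ineq1_le _).
  have : 0 <= (omega - 3 - 2 * C0) * L by apply: Rmult_le_pos; lra.
  nra.
have exp_mono : exp (omega * L) <= exp (/ 2 * omega * d * L).
  have : 0 <= (omega * L) * (d - 2) by apply: Rmult_le_pos; nra.
  move=> ?; case: (Req_dec (omega * L) (/ 2 * omega * d * L)) => [->|?]; first lra.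
  by apply/Rlt_le/exp_increasing; lra.
have : (1 + C0) * d ^ 3 <= exp (/ 2 * omega * d * L).
  apply: Rle_trans exp_mono.
  rewrite (_ : omega * L = (omega - 3) * L + 3 * L); last ring.
  rewrite exp_plus -d3; apply: Rmult_le_compat_r => //; nra.
have : 1 <= d ^ 3 by rewrite /=; nra.
nra.
Qed.

(* M d bounds the expected load d^2 q of a row; with e^2 <= 9 and ln d > 1/2,
   omega >= 18 M puts K = omega d ln d above e^2 times that load. *)
Lemma sparse_sketch_success (T : finType) (V : pred T) (m n d : nat)
    (hit : 'I_m -> pred T) (E : {ffun 'I_n -> T} -> bool) (q C0 M omega : R) :
  (2 <= d)%N -> (d ^ 2 <= n)%N -> 0 < C0 -> 0 <= M -> 18 * M + 3 + 2 * C0 <= omega ->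
  INR m <= C0 * INR d ^ 3 + 1 -> 0 <= q -> INR (d ^ 2) * q <= M * INR d ->
  (0 < #|V|)%N ->
  (forall r, INR #|[pred t | V t && hit r t]| <= q * INR #|V|) ->
  (forall w, w \in valid_configs V n ->
     (forall r, INR #|hit_cols (hit r) (d ^ 2) w| <= omega * INR d * ln (INR d)) -> E w) ->
  INR #|[set w in valid_configs V n | E w]| / INR #|valid_configs V n|
  >= 1 - exp (- (/ 2 * omega * INR d * ln (INR d))).
Proof.
move=> d2 dn C0_gt0 M_ge0 omega_ge m_le q_ge0 Dq_le V0 hit_le good.
have d2R : 2 <= INR d by apply: (le_INR 2); apply/leP.
have L_gt := ln_gt_half d2R.
set K := omega * INR d * ln (INR d).
have K0 : 0 < K by rewrite /K; apply: Rmult_lt_0_compat; nra.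
have [k [k0 [K_lt k_le]]] := exists_nat_between K0.
have tail : INR 'C(d ^ 2, k) * q ^ k <= exp (- K).
  apply: Rle_trans (_ : exp (- INR k) <= _); last by apply/Rlt_le/exp_increasing; lra.
  apply: binomial_tail_le_exp => //; apply: Rle_trans (_ : 9 * (M * INR d) <= _).
    have e2 : exp 2 <= 9.
      rewrite (_ : 2 = 1 + 1) ?exp_plus; last ring.
      by have := exp_le_3; have := exp_pos 1; nra.
    have := exp_pos 2; have : 0 <= INR (d ^ 2) * q by apply: Rmult_le_pos => //; exact: pos_INR.
    nra.
  have : 9 * M <= omega * ln (INR d) by nra.
  by rewrite /K in K_lt; nra.
apply: Rge_trans (frac_good_configs_ge (D := d ^ 2) (k := k) (E := E) _ V0 _ hit_le) _.
- by apply: leq_trans dn.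
- move=> w wV light; apply: good => // r.
  have : INR #|hit_cols (hit r) (d ^ 2) w| + 1 <= INR k.
    by rewrite -S_INR; apply/le_INR/leP; exact: light.
  by rewrite /K in k_le; lra.
apply/Rle_ge; have := rows_exp_tail_le C0_gt0 (ltac:(lra) : 3 + 2 * C0 <= omega) d2R m_le.
have := Rmult_le_compat_l _ _ _ (pos_INR m) tail; rewrite -/K; lra.
Qed.

Lemma Rleb_true x y : x <= y -> Rleb x y.
Proof. by rewrite /Rleb; case: (Rle_dec x y). Qed.

Lemma countsketch_pnorm_le p K (D m n : nat) (w : CS_config m n) (y : 'I_n -> R) :
  1 <= p -> 0 < K ->
  (forall r, INR #|[set j : 'I_n | (j < D)%N && ((w j).1 == r)]| <= K) ->
  pnorm p (mxapply (CS_matrix w) (restrict D y)) <= rpow K (1 - / p) * pnorm p y.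
Proof.
move=> p1 K0 load_le.
have -> : rpow K (1 - / p) = rpow (rpow K (p - 1) * rpow 1 p * INR 1) (/ p).
  rewrite (rpowE _ Rlt_0_1) /Rpower ln_1 Rmult_0_r exp_0 /= !Rmult_1_r rpow_rpow.
  by f_equal; field; lra.
apply: (sketch_pnorm_le (supp := fun r j => (w j).1 == r)) => //.
- lra.
- by move=> r j; rewrite /CS_matrix => /negbTE ->.
- move=> r j; rewrite /CS_matrix; case: ifP => _; last by rewrite Rabs_R0; lra.
  by case: (w j).2; rewrite /sgnR ?Rabs_Ropp Rabs_R1; lra.
- move=> j; apply: leq_trans (_ : #|[set (w j).1]| <= 1)%N; last by rewrite cards1.
  by apply/subset_leq_card/subsetP => r; rewrite !inE => /eqP ->.
Qed.

Lemma countsketch_restrict_tail (p C0 M omega : R) (d n m : nat) (y : 'I_n -> R) :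
  1 <= p -> (2 <= d)%N -> (d ^ 2 <= n)%N -> 0 < C0 -> / C0 <= M ->
  18 * M + 3 + 2 * C0 <= omega -> INR m - 1 < C0 * INR d ^ 2 <= INR m ->
  probCS (fun w : CS_config m n =>
    Rleb (pnorm p (mxapply (CS_matrix w) (restrict (d ^ 2) y)))
         (rpow (omega * INR d * ln (INR d)) (1 - / p) * pnorm p y))
  >= 1 - exp (- (/ 2 * omega * INR d * ln (INR d))).
Proof.
move=> p1 d2 dn C0_gt0 M_ge omega_ge [m_lt m_ge].
have d2R : 2 <= INR d by apply: (le_INR 2); apply/leP.
have m0 : 0 < INR m.
  have : 0 < C0 * INR d ^ 2 by apply: Rmult_lt_0_compat; nra.
  lra.
have M0 : 0 < M by have := Rinv_0_lt_compat _ C0_gt0; lra.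
pose V := [pred _ : 'I_m * bool | true].
pose hit (r : 'I_m) := [pred t : 'I_m * bool | t.1 == r].
set E := fun w : CS_config m n => Rleb _ _.
have -> : probCS E = INR #|[set w in valid_configs V n | E w]| / INR #|valid_configs V n|.
  rewrite /probCS; congr (INR _ / INR _); apply: eq_card => w; rewrite !inE.
    by have -> : [forall j, V (w j)] by apply/forallP.
  by symmetry; apply/forallP.
have card_V : #|V| = (m * 2)%N.
  by rewrite (eq_card (B := predT)) // card_prod card_ord card_bool.
apply: (sparse_sketch_success (hit := hit) (q := / INR m) d2 dn C0_gt0
          (Rlt_le _ _ M0) omega_ge).
- have : INR d ^ 2 <= INR d ^ 3 by rewrite /=; nra.
  nra.
- exact/Rlt_le/Rinv_0_lt_compat.
- rewrite INR_expn; apply: Rle_trans (_ : / C0 <= _); last nra.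
  apply: (Rmult_le_reg_r (C0 * INR m)); first nra.
  rewrite (_ : INR d ^ 2 * / INR m * (C0 * INR m) = C0 * INR d ^ 2); last by field; lra.
  by rewrite (_ : / C0 * (C0 * INR m) = INR m); [lra | field; lra].
- by rewrite card_V muln_gt0; apply/andP; split => //; apply/ltP/INR_lt; rewrite /=; lra.
- move=> r; rewrite card_V INR_muln.
  have -> : #|[pred t | V t && hit r t]| = #|setX [set r] [set: bool]|.
    by apply: eq_card => -[a b]; rewrite !inE /= andbT.
  rewrite cardsX cards1 cardsT card_bool INR_muln; right; simpl; field; lra.
- move=> w _ load_le; apply/Rleb_true/countsketch_pnorm_le => //.
  by have L_gt := ln_gt_half d2R; apply: Rmult_lt_0_compat; nra.
Qed.

Section OsnapColumns.
Variables (m s : nat).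
Hypotheses (s_gt0 : (0 < s)%N) (s_le_m : (s <= m)%N).

Let column := ({set 'I_m} * {ffun 'I_m -> bool})%type.

Lemma card_ksets_containing (r : 'I_m) :
  (#|[set S : {set 'I_m} | (#|S| == s) && (r \in S)]| <= 'C(m.-1, s.-1))%N.
Proof.
set A := [set S : {set 'I_m} | _].
have remove_inj : {in A &, injective (fun S : {set 'I_m} => S :\ r)}.
  move=> S1 S2; rewrite !inE => /andP [_ rS1] /andP [_ rS2] eqS.
  by rewrite -(setD1K rS1) -(setD1K rS2) eqS.
rewrite -(card_in_imset remove_inj); apply: leq_trans (_ : #|[set S' : {set 'I_m} |
    S' \subset [set~ r] & #|S'| == s.-1]| <= _)%N; last first.
  by rewrite cards_draws cardsC1 card_ord.
apply/subset_leq_card/subsetP => _ /imsetP [S + ->]; rewrite !inE => /andP [/eqP S_s rS].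
apply/andP; split; first by apply/subsetP => x; rewrite !inE => /andP [].
by move: (cardsD1 r S); rewrite rS S_s add1n => ->.
Qed.

Lemma card_osnap_columns :
  #|[pred t : column | #|t.1| == s]| = ('C(m, s) * #|[set: {ffun 'I_m -> bool}]|)%N.
Proof.
have -> : 'C(m, s) = #|[set S : {set 'I_m} | #|S| == s]| by rewrite card_draws card_ord.
by rewrite -cardsX; apply: eq_card => -[S f]; rewrite !inE andbT.
Qed.

Lemma osnap_hit_le (r : 'I_m) :
  INR #|[pred t : column | (#|t.1| == s) && (r \in t.1)]|
  <= INR s / INR m * INR #|[pred t : column | #|t.1| == s]|.
Proof.
have m0 : 0 < INR m by apply: lt_0_INR; apply/ltP; lia.
have -> : #|[pred t : column | (#|t.1| == s) && (r \in t.1)]| =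
    (#|[set S : {set 'I_m} | (#|S| == s) && (r \in S)]| * #|[set: {ffun 'I_m -> bool}]|)%N.
  by rewrite -cardsX; apply: eq_card => -[S f]; rewrite !inE andbT.
rewrite card_osnap_columns !INR_muln -Rmult_assoc; apply: Rmult_le_compat_r.
  exact: pos_INR.
apply: (Rmult_le_reg_r (INR m)) => //.
rewrite (_ : INR s / INR m * INR 'C(m, s) * INR m = INR s * INR 'C(m, s)); last by field; lra.
rewrite -!INR_muln; apply/le_INR/leP.
have <- : (m * 'C(m.-1, s.-1) = s * 'C(m, s))%N by case: s s_gt0 => // s' _; rewrite mul_bin_diag.
by rewrite mulnC leq_mul2l card_ksets_containing orbT.
Qed.

Lemma osnap_columns_gt0 : (0 < #|[pred t : column | #|t.1| == s]|)%N.
Proof.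
by rewrite card_osnap_columns muln_gt0 bin_gt0 s_le_m cardsT card_ffun expn_gt0 card_bool.
Qed.

End OsnapColumns.

Lemma osnap_scale K p s : 0 < K -> 1 <= p -> 0 < s ->
  rpow (rpow K (p - 1) * rpow (/ sqrt s) p * s) (/ p)
  = rpow s (/ p - / 2) * rpow K (1 - / p).
Proof.
move=> K0 p1 s0; have sqrt0 : 0 < / sqrt s by apply/Rinv_0_lt_compat/sqrt_lt_R0.
rewrite rpow_mult_distr; [|by apply: Rmult_le_pos; exact: rpow_ge0 | lra].
rewrite rpow_mult_distr ?rpow_rpow; try exact: rpow_ge0.
rewrite (_ : (p - 1) * / p = 1 - / p); last by field; lra.
rewrite (_ : p * / p = 1); last by field; lra.
rewrite rpow_1; last lra.
rewrite (_ : / p - / 2 = / p + - / 2); last ring.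
by rewrite rpow_plus // (rpowE (- / 2) s0) Rpower_Ropp Rpower_sqrt //; ring.
Qed.


Lemma osnap_pnorm_le p K (D m n s : nat) (w : OS_config m n) (y : 'I_n -> R) :
  1 <= p -> 0 < K -> (0 < s)%N -> OS_valid s w ->
  (forall r, INR #|[set j : 'I_n | (j < D)%N && (r \in (w j).1)]| <= K) ->
  pnorm p (mxapply (OS_matrix s w) (restrict D y))
  <= rpow (INR s) (/ p - / 2) * rpow K (1 - / p) * pnorm p y.
Proof.
move=> p1 K0 s_gt0 wV load_le; have s0 : 0 < INR s by apply/lt_0_INR/ltP.
have isqrt0 : 0 < / sqrt (INR s) by apply/Rinv_0_lt_compat/sqrt_lt_R0.
rewrite -(osnap_scale K0 p1 s0).
apply: (sketch_pnorm_le (supp := fun r j => r \in (w j).1)) => //.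
- lra.
- by move=> r j; rewrite /OS_matrix => /negbTE ->.
- move=> r j; rewrite /OS_matrix; case: ifP => _; last by rewrite Rabs_R0; lra.
  rewrite /Rdiv Rabs_mult (Rabs_right (/ sqrt (INR s))); last lra.
  by case: ((w j).2 r); rewrite /sgnR ?Rabs_Ropp Rabs_R1; lra.
- move=> j; move/forallP/(_ j)/eqP: wV => <-.
  by apply/eq_leq/eq_card => r; rewrite inE.
Qed.

Lemma osnap_dims (C0 C1 B : R) (d m s : nat) :
  (2 <= d)%N -> 0 < C0 -> 0 < C1 -> 2 < B <= INR d ->
  INR m - 1 < C0 * B * INR d * ln (INR d) <= INR m ->
  INR s - 1 < C1 * (ln (INR d) / ln B) <= INR s ->
  INR m <= C0 * INR d ^ 3 + 1 /\ INR d * (INR s / INR m) <= (C1 + 1) / C0.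
Proof.
move=> d2 C0_gt0 C1_gt0 [B2 Bd] [m_lt m_ge] [s_lt s_ge].
have d2R : 2 <= INR d by apply: (le_INR 2); apply/leP.
have L_gt := ln_gt_half d2R; have lnB := ln_gt_half (Rlt_le _ _ B2).
have m0 : 0 < INR m.
  have : 0 < C0 * B * INR d * ln (INR d) by repeat apply: Rmult_lt_0_compat => //; lra.
  lra.
split.
  have : B * INR d * ln (INR d) <= INR d ^ 3.
    have : ln (INR d) <= INR d by have := exp_ineq1_le (ln (INR d)); rewrite exp_ln; lra.
    have : B * INR d <= INR d * INR d by nra.
    rewrite /=; nra.
  nra.
have s_le : INR s <= (C1 + 1) * B * ln (INR d).
  have : ln (INR d) / ln B <= 2 * ln (INR d).
    apply: (Rmult_le_reg_r (ln B)); first lra.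
    rewrite (_ : ln (INR d) / ln B * ln B = ln (INR d)); [nra | field; lra].
  move/(Rmult_le_compat_l _ _ _ (Rlt_le _ _ C1_gt0)) => ratio_le.
  have : 1 <= B * ln (INR d) by nra.
  have : 2 * ln (INR d) <= B * ln (INR d) by nra.
  nra.
apply: (Rmult_le_reg_r (C0 * INR m)); first nra.
rewrite (_ : INR d * (INR s / INR m) * (C0 * INR m) = C0 * INR d * INR s); last by field; lra.
rewrite (_ : (C1 + 1) / C0 * (C0 * INR m) = (C1 + 1) * INR m); last by field; lra.
have : C0 * INR d * INR s <= C0 * INR d * ((C1 + 1) * B * ln (INR d)).
  by apply: Rmult_le_compat_l => //; nra.
nra.
Qed.

Lemma osnap_restrict_tail (p C0 C1 M omega B : R) (d n m s : nat) (y : 'I_n -> R) :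
  1 <= p -> (2 <= d)%N -> (d ^ 2 <= n)%N -> 0 < C0 -> 0 < C1 -> (C1 + 1) / C0 <= M ->
  18 * M + 3 + 2 * C0 <= omega -> 2 < B <= INR d ->
  INR m - 1 < C0 * B * INR d * ln (INR d) <= INR m ->
  INR s - 1 < C1 * (ln (INR d) / ln B) <= INR s -> (s <= m)%N ->
  probOS s (fun w : OS_config m n =>
    Rleb (pnorm p (mxapply (OS_matrix s w) (restrict (d ^ 2) y)))
         (rpow (INR s) (/ p - / 2) * rpow (omega * INR d * ln (INR d)) (1 - / p)
          * pnorm p y))
  >= 1 - exp (- (/ 2 * omega * INR d * ln (INR d))).
Proof.
move=> p1 d2 dn C0_gt0 C1_gt0 M_ge omega_ge B_bds m_bds s_bds sm.
have [m_le dsm_le] := osnap_dims d2 C0_gt0 C1_gt0 B_bds m_bds s_bds.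
have d2R : 2 <= INR d by apply: (le_INR 2); apply/leP.
have L_gt := ln_gt_half d2R.
have s_gt0 : (0 < s)%N.
  have lnB := ln_gt_half (Rlt_le _ _ (proj1 B_bds)).
  have ratio0 : 0 < C1 * (ln (INR d) / ln B).
    by apply: Rmult_lt_0_compat => //; apply: Rdiv_lt_0_compat; lra.
  by case: s_bds => _ ?; apply/ltP/INR_lt; rewrite /=; lra.
have s0 : 0 < INR s by apply/lt_0_INR/ltP.
have m0 : 0 < INR m by apply/lt_0_INR/ltP; exact: leq_trans sm.
have M0 : 0 < M.
  have : 0 < (C1 + 1) / C0 by apply: Rdiv_lt_0_compat; lra.
  lra.
pose V := [pred t : {set 'I_m} * {ffun 'I_m -> bool} | #|t.1| == s].
pose hit (r : 'I_m) := [pred t : {set 'I_m} * {ffun 'I_m -> bool} | r \in t.1].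
set E := fun w : OS_config m n => Rleb _ _.
have -> : probOS s E =
          INR #|[set w in valid_configs V n | E w]| / INR #|valid_configs V n|.
  by rewrite /probOS; congr (INR _ / INR _); apply: eq_card => w; rewrite !inE.
apply: (sparse_sketch_success (hit := hit) (q := INR s / INR m) d2 dn C0_gt0
          (Rlt_le _ _ M0) omega_ge m_le).
- exact/Rlt_le/Rdiv_lt_0_compat.
- have : 0 <= INR d * (INR s / INR m).
    by apply: Rmult_le_pos; [lra | exact/Rlt_le/Rdiv_lt_0_compat].
  rewrite INR_expn (_ : INR d ^ 2 * (INR s / INR m) = INR d * (INR d * (INR s / INR m))).
    nra.
  ring.
- exact: osnap_columns_gt0.
- by move=> r; apply: osnap_hit_le.
- move=> w wV load_le; apply/Rleb_true/osnap_pnorm_le => //.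
  + by apply: Rmult_lt_0_compat; nra.
  + by rewrite inE in wV.
Qed.

Theorem mainTheorem15 (p C0 C1 : R) :
  1 <= p < 2 -> 0 < C0 -> 0 < C1 ->
  exists omega0 c : R, 0 < c /\
  forall (d n : nat) (omega : R) (y : 'I_n -> R),
    (2 <= d)%N -> (d ^ 2 <= n)%N -> omega0 <= omega ->
    (forall m : nat,
       INR m - 1 < C0 * INR d ^ 2 <= INR m ->
       probCS (fun w : CS_config m n =>
         Rleb (pnorm p (mxapply (CS_matrix w) (restrict (d ^ 2) y)))
              (rpow (omega * INR d * ln (INR d)) (1 - / p) * pnorm p y))
       >= 1 - exp (- (c * omega * INR d * ln (INR d))))
    /\
    (forall (B : R) (m s : nat),
       2 < B <= INR d ->
       INR m - 1 < C0 * B * INR d * ln (INR d) <= INR m ->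
       INR s - 1 < C1 * (ln (INR d) / ln B) <= INR s ->
       (s <= m)%N ->
       probOS s (fun w : OS_config m n =>
         Rleb (pnorm p (mxapply (OS_matrix s w) (restrict (d ^ 2) y)))
              (rpow (INR s) (/ p - / 2)
               * rpow (omega * INR d * ln (INR d)) (1 - / p) * pnorm p y))
       >= 1 - exp (- (c * omega * INR d * ln (INR d)))).
Proof.
move=> [p1 _] C0_gt0 C1_gt0; set M := (C1 + 1) / C0.
have M_ge : / C0 <= M.
  by rewrite /M /Rdiv; have := Rinv_0_lt_compat _ C0_gt0; nra.
exists (18 * M + 3 + 2 * C0), (/ 2); split; first lra.
move=> d n omega y d2 dn omega_ge; split.
- by move=> m; apply: (countsketch_restrict_tail (M := M)).
- by move=> B m s; apply: (osnap_restrict_tail (M := M)) => //; exact: Rle_refl.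
Qed.
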